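(* Let $m\ge3$ be odd and $n\ge2$. Suppose $\mathcal{A}=\sum_{l=1}^r(\mathbf{u}^{(l)})^m$ is a strongly completely positive tensor in which every vector $\mathbf{u}^{(1)},\dots,\mathbf{u}^{(r)}\in\mathbb{R}^n$ is positive (all components $>0$). Then $\mathcal{A}$ is strongly positive definite.
   Context: For $\mathbf{u}\in\mathbb{R}^n$, $\mathbf{u}^m$ is the tensor with entries $u_{i_1}\cdots u_{i_m}$. A tensor $\mathcal{A}=\sum_{l=1}^r(\mathbf{u}^{(l)})^m$ with nonnegative $\mathbf{u}^{(l)}$ is completely positive; it is strongly completely positive if moreover $r\ge n$ and $\{\mathbf{u}^{(1)},\dots,\mathbf{u}^{(r)}\}$ spans $\mathbb{R}^n$. For $\mathbf{x}\in\mathbb{R}^n$, $\mathcal{A}\mathbf{x}^{m-1}$ is the vector with $i$th component $\sum_{i_2,\dots,i_m}a_{ii_2\dots i_m}x_{i_2}\cdots x_{i_m}$. For odd $m$ and symmetric $\mathcal{A}$, $\mathcal{A}$ is strongly positive definite if $\mathcal{A}\mathbf{x}^{m-1}>\mathbf{0}$ componentwise for all nonzero $\mathbf{x}\in\mathbb{R}^n$. *)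

From mathcomp Require Import all_boot all_order all_algebra.
From mathcomp Require Import fingroup perm.
Set Implicit Arguments. Unset Strict Implicit. Unset Printing Implicit Defensive.
Import Order.TTheory GRing.Theory Num.Theory.
Local Open Scope ring_scope.

(* A real m-th order n-dimensional tensor: entries indexed by functions 'I_m -> 'I_n
   (entry a_{i_1 ... i_m} is A [ffun k => i_{k+1}]). Vectors in R^n are 'rV[R]_n. *)
Definition tensor (R : realFieldType) (m n : nat) := {ffun 'I_m -> 'I_n} -> R.

Definition rank1_pow (R : realFieldType) (m n : nat) (u : 'rV[R]_n) : tensor R m n :=
  fun f => \prod_(k < m) u 0 (f k).

Definition sum_rank1 (R : realFieldType) (m n r : nat) (u : 'I_r -> 'rV[R]_n)
  : tensor R m n := fun f => \sum_(l < r) @rank1_pow R m n (u l) f.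

(* A x^{m-1}: i-th component sum_{i_2..i_m} a_{i i_2 .. i_m} x_{i_2} ... x_{i_m};
   the first index is position 0 of 'I_m. *)
Definition tapply (R : realFieldType) (m n : nat) (A : tensor R m n) (x : 'rV[R]_n)
  : 'rV[R]_n :=
  \row_(i < n) \sum_(f in {ffun 'I_m -> 'I_n} | [forall k : 'I_m,
        (nat_of_ord k == 0)%N ==> (f k == i)])
      A f * \prod_(k < m | (nat_of_ord k != 0)%N) x 0 (f k).

Definition is_symmetric (R : realFieldType) (m n : nat) (A : tensor R m n) : Prop :=
  forall (f : {ffun 'I_m -> 'I_n}) (s : {perm 'I_m}), A [ffun k => f (s k)] = A f.

(* completely positive decomposition with nonnegative u^(l), and strongly:
   r >= n and {u^(1),...,u^(r)} spans R^n (the r x n matrix of rows is row-full) *)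
Definition strongly_cp_decomp (R : realFieldType) (m n r : nat)
  (u : 'I_r -> 'rV[R]_n) : Prop :=
  (forall l j, 0 <= u l 0 j) /\ (n <= r)%N /\ row_full (\matrix_(l < r) u l).

Definition strongly_pd (R : realFieldType) (m n : nat) (A : tensor R m n) : Prop :=
  is_symmetric A /\
  forall x : 'rV[R]_n, x != 0 -> forall i, 0 < tapply A x 0 i.

(** For [A = sum_l (u_l)^m] one has [(A x^(m-1))_i = sum_l (u_l)_i <u_l, x>^(m-1)].
    Since [m - 1] is even, every summand is nonnegative when the [u_l] are
    positive, and a summand is strictly positive as soon as [<u_l, x> <> 0].
    If [x <> 0], such an [l] exists because the [u_l] span [R^n]. *)

From mathcomp Require Import all_boot all_order all_algebra.
From mathcomp Require Import fingroup perm.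
Set Implicit Arguments. Unset Strict Implicit. Unset Printing Implicit Defensive.
Import Order.TTheory GRing.Theory Num.Theory.
Local Open Scope ring_scope.

Lemma sum_rank1_sym (R : realFieldType) (m n r : nat) (u : 'I_r -> 'rV[R]_n) :
  is_symmetric (@sum_rank1 R m n r u).
Proof.
move=> f s; apply: eq_bigr => l _.
rewrite /rank1_pow [RHS](reindex_inj (@perm_inj _ s)).
by apply: eq_bigr => k _; rewrite ffunE.
Qed.

Lemma tapply_sum_rank1 (R : realFieldType) (m n r : nat)
    (u : 'I_r -> 'rV[R]_n) (x : 'rV[R]_n) (i : 'I_n) :
  tapply (@sum_rank1 R m n r u) x 0 i
  = \sum_(l < r) tapply (@rank1_pow R m n (u l)) x 0 i.
Proof.
rewrite mxE; under eq_bigr do rewrite /sum_rank1 mulr_suml.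
by rewrite exchange_big; apply: eq_bigr => l _; rewrite mxE.
Qed.

Lemma forall_head_eq (m n : nat) (f : {ffun 'I_m.+1 -> 'I_n}) (i : 'I_n) :
  [forall k : 'I_m.+1, (nat_of_ord k == 0)%N ==> (f k == i)] = (f ord0 == i).
Proof.
apply/forall_inP/idP => [/(_ ord0 (eqxx _)) // | fi k /eqP k0].
by have -> : k = ord0 by apply: val_inj.
Qed.

(* Both sides are [\prod_k \sum_j F k j], where the factor [k = 0] pins the
   first index to [i] and the other factors are [<v, x>]. *)
Lemma tapply_rank1_pow (R : realFieldType) (m n : nat) (v x : 'rV[R]_n) (i : 'I_n) :
  tapply (@rank1_pow R m.+1 n v) x 0 i = v 0 i * (\sum_j v 0 j * x 0 j) ^+ m.
Proof.
pose F (k : 'I_m.+1) (j : 'I_n) :=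
  if (nat_of_ord k == 0)%N then (j == i)%:R * v 0 j else v 0 j * x 0 j.
have prod_sumF : \prod_k \sum_j F k j = v 0 i * (\sum_j v 0 j * x 0 j) ^+ m.
  rewrite big_ord_recl /F /= (bigD1 i) //= eqxx mul1r big1 ?addr0.
    by rewrite prodr_const card_ord.
  by move=> j /negbTE ->; rewrite mul0r.
rewrite mxE -prod_sumF bigA_distr_bigA big_mkcond /=.
apply: eq_bigr => f _; rewrite forall_head_eq [RHS]big_ord_recl /F /=.
case: eqVneq => [fi|]; last by rewrite !mul0r.
rewrite mul1r /rank1_pow big_ord_recl [X in _ * X]big_mkcond big_ord_recl /=.
by rewrite mul1r big_split /= fi mulrA.
Qed.

Lemma row_full_exists_dot_neq0 (R : fieldType) (n r : nat)
    (u : 'I_r -> 'rV[R]_n) (x : 'rV[R]_n) :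
  row_full (\matrix_(l < r) u l) -> x != 0 ->
  exists l, \sum_j u l 0 j * x 0 j != 0.
Proof.
move=> /row_fullP [B BU1] x_neq0; apply/existsP; apply: contraNT x_neq0.
move=> /existsPn dot0; rewrite -trmx_eq0 -[x^T]mul1mx -BU1 -mulmxA.
have -> : \matrix_(l < r) u l *m x^T = 0.
  apply/matrixP => l j; rewrite !mxE (ord1 j); apply/eqP; rewrite -[_ == 0]negbK.
  by rewrite (eq_bigr (fun k => u l 0 k * x 0 k)) ?dot0 // => k _; rewrite !mxE.
by rewrite mulmx0.
Qed.

Theorem corollary3p5 (R : realFieldType) (m n r : nat)
  (hm3 : (3 <= m)%N) (hmodd : odd m) (hn2 : (2 <= n)%N)
  (u : 'I_r -> 'rV[R]_n)
  (hscp : @strongly_cp_decomp R m n r u)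
  (hpos : forall l j, 0 < u l 0 j) :
  @strongly_pd R m n (@sum_rank1 R m n r u).
Proof.
case: hscp => _ [_ u_full]; split; first exact: sum_rank1_sym.
case: m hm3 hmodd => // m _ /= /negbTE m_even x x_neq0 i.
have [l0 dot_l0] := row_full_exists_dot_neq0 u_full x_neq0.
rewrite tapply_sum_rank1; under eq_bigr do rewrite tapply_rank1_pow.
rewrite (bigD1 l0) //=; apply: ltr_wpDr.
  by apply: sumr_ge0 => l _; rewrite mulr_ge0 ?(ltW (hpos _ _)) ?exprn_even_ge0 ?m_even.
by rewrite mulr_gt0 ?hpos ?exprn_even_gt0 ?m_even ?dot_l0 ?orbT.
Qed.
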